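(* Assume $r>\mu$, $C-rK_O>0$, $C+rK_I>0$ and $K_I+K_O\ge0$. Then the equation \[ A(\lambda_2-\lambda_1)p^{\lambda_1}+\frac{e^{(\mu-r)\delta}}{r-\mu}(\lambda_2-1)p-\lambda_2e^{-r\delta}\left(\frac{C}{r}+K_I\right)=0 \] has exactly two solutions $p_1,p_2$ in $(0,+\infty)$, and they satisfy $p_1\le p_O$ and $p_2>p_O$. Furthermore, $\lambda_1Ap_2^{\lambda_1-1}+\frac{e^{(\mu-r)\delta}}{r-\mu}>0$.
   Context: Constants: $\mu\in\mathbb{R}$, $\sigma>0$, $r>0$, $C,K_I,K_O\in\mathbb{R}$, $\delta\ge0$. $\lambda_1<\lambda_2$ are the roots of $r-\mu\lambda-\frac12\sigma^2\lambda(\lambda-1)=0$ (so $\lambda_1<0$, $\lambda_2>1$ when $r>\mu$). $p_O:=e^{-\mu\delta}\frac{\lambda_1}{\lambda_1-1}(r-\mu)\left(\frac{C}{r}-K_O\right)$ and $A:=e^{(\mu-r)\delta}p_O^{1-\lambda_1}/(\lambda_1(\mu-r))$. *)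

From Stdlib Require Import Reals.
Open Scope R_scope.

Definition charq (mu sigma r l : R) : R :=
  r - mu * l - / 2 * sigma ^ 2 * l * (l - 1).

Definition pO (mu r C KO delta lam1 : R) : R :=
  exp (- mu * delta) * (lam1 / (lam1 - 1)) * (r - mu) * (C / r - KO).

Definition Acoef (mu r C KO delta lam1 : R) : R :=
  exp ((mu - r) * delta) * Rpower (pO mu r C KO delta lam1) (1 - lam1)
    / (lam1 * (mu - r)).

(* Left-hand side of the equation, for p > 0 (p^lam1 = Rpower p lam1). *)
Definition eqF (mu r C KI KO delta lam1 lam2 p : R) : R :=
  Acoef mu r C KO delta lam1 * (lam2 - lam1) * Rpower p lam1
  + exp ((mu - r) * delta) / (r - mu) * (lam2 - 1) * p
  - lam2 * exp (- r * delta) * (C / r + KI).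

From Stdlib Require Import Reals Lra Psatz.
From Coquelicot Require Import Coquelicot.
Open Scope R_scope.

(* Substituting p = e^t turns the equation into m e^{a t} + c e^t = D with
   a = lam1 < 0 and m, c > 0.  The left-hand side tends to +oo at both ends and
   its derivative e^t (m a e^{(a-1) t} + c) changes sign exactly once, so there
   are exactly two roots as soon as the difference is <= 0 somewhere.  At
   t = ln p_O the difference is -lam2 e^{-r delta} (K_I + K_O) <= 0 and the
   derivative is negative, hence p_1 <= p_O < p_2.  The choice of A makes
   lam1 A p^{lam1-1} + e^{(mu-r) delta}/(r-mu) vanish at p_O, and it increases
   in p. *)

Section Valley.

Variables (h h' : R -> R) (s : R).
Hypothesis h_derivative : forall t, derivable_pt_lim h t (h' t).
Hypothesis h'_neg_left : forall t, t < s -> h' t < 0.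
Hypothesis h'_pos_right : forall t, s < t -> 0 < h' t.

Lemma valley_decreasing x y : x < y -> y <= s -> h y < h x.
Proof.
  intros Hxy Hys.
  destruct (MVT_cor2 h h' x y Hxy) as [z [Hz Hxzy]]; [intros; apply h_derivative|].
  assert (h' z < 0) by (apply h'_neg_left; lra). nra.
Qed.

Lemma valley_increasing x y : s <= x -> x < y -> h x < h y.
Proof.
  intros Hsx Hxy.
  destruct (MVT_cor2 h h' x y Hxy) as [z [Hz Hxzy]]; [intros; apply h_derivative|].
  assert (0 < h' z) by (apply h'_pos_right; lra). nra.
Qed.

Lemma valley_injective_left x y : x <= s -> y <= s -> h x = h y -> x = y.
Proof.
  intros Hx Hy Hxy. destruct (Rtotal_order x y) as [Hlt|[|Hlt]]; auto.
  - pose proof (valley_decreasing x y Hlt Hy). lra.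
  - pose proof (valley_decreasing y x Hlt Hx). lra.
Qed.

Lemma valley_injective_right x y : s <= x -> s <= y -> h x = h y -> x = y.
Proof.
  intros Hx Hy Hxy. destruct (Rtotal_order x y) as [Hlt|[|Hlt]]; auto.
  - pose proof (valley_increasing x y Hx Hlt). lra.
  - pose proof (valley_increasing y x Hy Hlt). lra.
Qed.

Lemma valley_two_roots tL tR :
  tL < s -> s < tR -> 0 < h tL -> h s < 0 -> 0 < h tR ->
  exists t1 t2, t1 < s < t2 /\ h t1 = 0 /\ h t2 = 0 /\
    forall t, h t = 0 -> t = t1 \/ t = t2.
Proof.
  intros HLs HsR HL Hs HR.
  assert (Hcont : continuity h).
  { intro t. apply derivable_continuous_pt. exists (h' t). apply h_derivative. }
  destruct (IVT_cor h tL s Hcont ltac:(lra) ltac:(nra)) as [t1 [Ht1 Ht1']].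
  destruct (IVT_cor h s tR Hcont ltac:(lra) ltac:(nra)) as [t2 [Ht2 Ht2']].
  assert (t1 <> s) by (intros ->; lra).
  assert (t2 <> s) by (intros ->; lra).
  exists t1, t2. split; [lra|]. split; [exact Ht1'|]. split; [exact Ht2'|].
  intros t Ht.
  destruct (Rle_lt_dec t s); [left; apply valley_injective_left | right; apply valley_injective_right];
    lra.
Qed.

End Valley.

Definition exp_mix (m a c D t : R) : R := m * exp (a * t) + c * exp t - D.

Definition exp_mix_slope (m a c t : R) : R := m * a * exp ((a - 1) * t) + c.

Lemma exp_mix_derivative m a c D t :
  derivable_pt_lim (exp_mix m a c D) t (exp t * exp_mix_slope m a c t).
Proof.
  apply is_derive_Reals. unfold exp_mix, exp_mix_slope. auto_derive; [easy|].
  replace (a * t) with (t + (a - 1) * t) by ring. rewrite exp_plus. ring.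
Qed.

Section ExpMix.

Variables m a c D : R.
Hypotheses (a_neg : a < 0) (m_pos : 0 < m) (c_pos : 0 < c).

Lemma exp_mix_slope_increasing x y : x < y -> exp_mix_slope m a c x < exp_mix_slope m a c y.
Proof.
  intros Hxy. unfold exp_mix_slope.
  assert (exp ((a - 1) * y) < exp ((a - 1) * x)) by (apply exp_increasing; nra).
  assert (m * a < 0) by nra. nra.
Qed.

Definition exp_mix_critical : R := ln (c / - (m * a)) / (a - 1).

Lemma exp_mix_slope_critical : exp_mix_slope m a c exp_mix_critical = 0.
Proof.
  unfold exp_mix_slope, exp_mix_critical.
  replace ((a - 1) * (ln (c / - (m * a)) / (a - 1))) with (ln (c / - (m * a))) by (field; lra).
  assert (m * a < 0) by nra.
  rewrite exp_ln; [field; lra|apply Rdiv_lt_0_compat; lra].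
Qed.

Lemma exp_mix_derivative_neg t :
  t < exp_mix_critical -> exp t * exp_mix_slope m a c t < 0.
Proof.
  intros Ht. pose proof (exp_pos t).
  pose proof (exp_mix_slope_increasing _ _ Ht). rewrite exp_mix_slope_critical in *. nra.
Qed.

Lemma exp_mix_derivative_pos t :
  exp_mix_critical < t -> 0 < exp t * exp_mix_slope m a c t.
Proof.
  intros Ht. pose proof (exp_pos t).
  pose proof (exp_mix_slope_increasing _ _ Ht). rewrite exp_mix_slope_critical in *. nra.
Qed.

Lemma exp_mix_pos_left t : t <= D / (m * a) -> 0 < exp_mix m a c D t.
Proof.
  intros Ht. unfold exp_mix.
  pose proof (exp_ineq1_le (a * t)). pose proof (exp_pos t).
  assert (D <= m * (a * t)).
  { assert (m * a < 0) by nra.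
    replace D with (m * a * (D / (m * a))) by (field; split; lra). nra. }
  nra.
Qed.

Lemma exp_mix_pos_right t : D / c <= t -> 0 < exp_mix m a c D t.
Proof.
  intros Ht. unfold exp_mix.
  pose proof (exp_ineq1_le t). pose proof (exp_pos (a * t)).
  assert (D <= c * t) by (replace D with (c * (D / c)) by (field; lra); nra).
  nra.
Qed.

Lemma exp_mix_two_roots tO :
  exp_mix m a c D tO <= 0 -> exp_mix_slope m a c tO < 0 ->
  exists t1 t2, t1 <= tO < t2 /\
    exp_mix m a c D t1 = 0 /\ exp_mix m a c D t2 = 0 /\
    forall t, exp_mix m a c D t = 0 -> t = t1 \/ t = t2.
Proof.
  intros HO HslopeO.
  pose proof exp_mix_slope_critical as Hcrit.
  set (s := exp_mix_critical) in *.
  pose proof (valley_decreasing _ _ s (exp_mix_derivative m a c D)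
                exp_mix_derivative_neg) as Hdec.
  assert (HOs : tO < s).
  { destruct (Rlt_le_dec tO s) as [|[Hlt|Heq]]; [easy| |subst; lra].
    pose proof (exp_mix_slope_increasing _ _ Hlt). lra. }
  assert (Hs : exp_mix m a c D s < 0) by (specialize (Hdec tO s HOs ltac:(lra)); lra).
  destruct (valley_two_roots _ _ s (exp_mix_derivative m a c D)
              exp_mix_derivative_neg exp_mix_derivative_pos
              (Rmin (tO - 1) (D / (m * a))) (Rmax (s + 1) (D / c)))
    as [t1 [t2 [Ht12 [Ht1 [Ht2 Huniq]]]]].
  - pose proof (Rmin_l (tO - 1) (D / (m * a))). lra.
  - pose proof (Rmax_l (s + 1) (D / c)). lra.
  - apply exp_mix_pos_left, Rmin_r.
  - exact Hs.
  - apply exp_mix_pos_right, Rmax_r.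
  - exists t1, t2. repeat split; try easy; try lra.
    destruct (Rle_lt_dec t1 tO) as [|HOt1]; [easy|].
    specialize (Hdec tO t1 HOt1 ltac:(lra)). lra.
Qed.

End ExpMix.

Lemma charq_roots_sign mu sigma r l1 l2 :
  0 < sigma -> 0 < r -> r > mu ->
  charq mu sigma r l1 = 0 -> charq mu sigma r l2 = 0 -> l1 < l2 ->
  l1 < 0 /\ 1 < l2.
Proof.
  unfold charq. intros Hsigma Hr Hmu H1 H2 H12.
  set (k := / 2 * sigma ^ 2) in *.
  assert (Hk : 0 < k) by (unfold k; nra).
  assert (Hvieta : mu = k * (1 - l1 - l2)).
  { assert (E : (l1 - l2) * (- mu - k * (l1 + l2) + k) = 0) by nra.
    apply Rmult_integral in E. destruct E; lra. }
  subst mu.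
  assert (Hprod : r + k * (l1 * l2) = 0) by nra.
  assert (l1 * l2 < 0) by nra.
  assert (l1 < 0) by nra.
  assert ((1 - l1) * (1 - l2) < 0) by nra.
  split; nra.
Qed.

Section Thresholds.

Variables mu r C KI KO delta lam1 lam2 : R.
Hypotheses (lam1_neg : lam1 < 0) (r_pos : 0 < r) (mu_lt_r : mu < r).
Hypothesis KO_small : C - r * KO > 0.

Local Notation P := (pO mu r C KO delta lam1).
Local Notation A := (Acoef mu r C KO delta lam1).
Local Notation E := (exp ((mu - r) * delta)).
Local Notation m := (A * (lam2 - lam1)).
Local Notation c := (E / (r - mu) * (lam2 - 1)).
Local Notation D := (lam2 * exp (- r * delta) * (C / r + KI)).

Lemma pO_pos : 0 < P.
Proof.
  unfold pO.
  assert (0 < C / r - KO) by (replace (C / r - KO) with ((C - r * KO) / r) by (field; lra);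
                              apply Rdiv_lt_0_compat; lra).
  assert (0 < lam1 / (lam1 - 1))
    by (replace (lam1 / (lam1 - 1)) with (- lam1 / (1 - lam1)) by (field; lra);
        apply Rdiv_lt_0_compat; lra).
  pose proof (exp_pos (- mu * delta)).
  apply Rmult_lt_0_compat; [apply Rmult_lt_0_compat; [apply Rmult_lt_0_compat|]|]; lra.
Qed.

Lemma Acoef_pos : 0 < A.
Proof.
  unfold Acoef. apply Rdiv_lt_0_compat; [|nra].
  apply Rmult_lt_0_compat; [apply exp_pos|apply exp_pos].
Qed.

Lemma Acoef_mul_Rpower x :
  A * Rpower P x = E * Rpower P (x + 1 - lam1) / (lam1 * (mu - r)).
Proof.
  unfold Acoef. replace (x + 1 - lam1) with (1 - lam1 + x) by ring.
  rewrite Rpower_plus. field. nra.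
Qed.

Lemma slope_at_pO : lam1 * A * Rpower P (lam1 - 1) + E / (r - mu) = 0.
Proof.
  rewrite Rmult_assoc, Acoef_mul_Rpower.
  replace (lam1 - 1 + 1 - lam1) with 0 by ring. rewrite Rpower_O by apply pO_pos.
  field. nra.
Qed.

Lemma slope_pos_beyond_pO p : P < p -> 0 < lam1 * A * Rpower p (lam1 - 1) + E / (r - mu).
Proof.
  intros HPp. pose proof pO_pos. pose proof Acoef_pos.
  assert (Rpower p (lam1 - 1) < Rpower P (lam1 - 1)).
  { unfold Rpower. apply exp_increasing.
    pose proof (ln_increasing P p ltac:(lra) HPp). nra. }
  assert (lam1 * A < 0) by nra.
  pose proof slope_at_pO. nra.
Qed.

Lemma eqF_at_pO : eqF mu r C KI KO delta lam1 lam2 P = - lam2 * exp (- r * delta) * (KI + KO).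
Proof.
  unfold eqF.
  replace (A * (lam2 - lam1) * Rpower P lam1) with (A * Rpower P lam1 * (lam2 - lam1)) by ring.
  rewrite Acoef_mul_Rpower.
  replace (lam1 + 1 - lam1) with 1 by ring. rewrite Rpower_1 by apply pO_pos.
  replace (- r * delta) with ((mu - r) * delta + - mu * delta) by ring. rewrite exp_plus.
  unfold pO. field. repeat split; lra.
Qed.

Lemma eqF_exp_mix p : 0 < p -> eqF mu r C KI KO delta lam1 lam2 p = exp_mix m lam1 c D (ln p).
Proof.
  intros Hp. unfold eqF, exp_mix. rewrite exp_ln by exact Hp. reflexivity.
Qed.

Lemma exp_mix_slope_at_pO : exp_mix_slope m lam1 c (ln P) = (lam1 - 1) * (E / (r - mu)).
Proof.
  unfold exp_mix_slope. change (exp ((lam1 - 1) * ln P)) with (Rpower P (lam1 - 1)).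
  pose proof slope_at_pO.
  replace (A * (lam2 - lam1) * lam1 * Rpower P (lam1 - 1))
    with ((lam2 - lam1) * (lam1 * A * Rpower P (lam1 - 1))) by ring.
  replace (lam1 * A * Rpower P (lam1 - 1)) with (- (E / (r - mu))) by lra.
  ring.
Qed.

End Thresholds.

Theorem lemma5p7 (mu sigma r C KI KO delta lam1 lam2 : R) :
  0 < sigma -> 0 < r -> 0 <= delta ->
  charq mu sigma r lam1 = 0 -> charq mu sigma r lam2 = 0 -> lam1 < lam2 ->
  r > mu -> C - r * KO > 0 -> C + r * KI > 0 -> KI + KO >= 0 ->
  exists p1 p2 : R,
    0 < p1 /\ 0 < p2 /\ p1 <> p2 /\
    eqF mu r C KI KO delta lam1 lam2 p1 = 0 /\
    eqF mu r C KI KO delta lam1 lam2 p2 = 0 /\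
    (forall p, 0 < p -> eqF mu r C KI KO delta lam1 lam2 p = 0 -> p = p1 \/ p = p2) /\
    p1 <= pO mu r C KO delta lam1 /\ p2 > pO mu r C KO delta lam1 /\
    lam1 * Acoef mu r C KO delta lam1 * Rpower p2 (lam1 - 1)
      + exp ((mu - r) * delta) / (r - mu) > 0.
Proof.
  intros Hsigma Hr _ H1 H2 H12 Hmu HO HI HIO.
  destruct (charq_roots_sign mu sigma r lam1 lam2 Hsigma Hr Hmu H1 H2 H12) as [Hl1 Hl2].
  pose proof (pO_pos mu r C KO delta lam1 Hl1 Hr Hmu HO) as HP.
  pose proof (Acoef_pos mu r C KO delta lam1 Hl1 Hmu).
  pose proof (exp_pos (- r * delta)).
  assert (0 < exp ((mu - r) * delta) / (r - mu)) by (apply Rdiv_lt_0_compat; [apply exp_pos|lra]).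
  assert (0 < C / r + KI) by (replace (C / r + KI) with ((C + r * KI) / r) by (field; lra);
                              apply Rdiv_lt_0_compat; lra).
  destruct (exp_mix_two_roots (Acoef mu r C KO delta lam1 * (lam2 - lam1)) lam1
              (exp ((mu - r) * delta) / (r - mu) * (lam2 - 1))
              (lam2 * exp (- r * delta) * (C / r + KI)) Hl1
              ltac:(nra) ltac:(nra) (ln (pO mu r C KO delta lam1)))
    as [t1 [t2 [[Ht1O HOt2] [Ht1 [Ht2 Huniq]]]]].
  - rewrite <- eqF_exp_mix, (eqF_at_pO mu r C KI KO delta lam1 lam2 Hl1 Hr Hmu HO) by exact HP.
    assert (0 < lam2 * exp (- r * delta)) by nra. nra.
  - rewrite (exp_mix_slope_at_pO mu r C KO delta lam1 lam2 Hl1 Hr Hmu HO). nra.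
  - exists (exp t1), (exp t2).
    repeat split; try apply exp_pos.
    + intros E. apply exp_inv in E. lra.
    + rewrite eqF_exp_mix, ln_exp by apply exp_pos. exact Ht1.
    + rewrite eqF_exp_mix, ln_exp by apply exp_pos. exact Ht2.
    + intros p Hp Hroot. rewrite eqF_exp_mix in Hroot by exact Hp.
      rewrite <- (exp_ln p Hp). destruct (Huniq _ Hroot) as [-> | ->]; auto.
    + rewrite <- (exp_ln _ HP).
      destruct Ht1O as [Hlt | ->]; [left; apply exp_increasing, Hlt | right; reflexivity].
    + rewrite <- (exp_ln _ HP). apply exp_increasing, HOt2.
    + apply (slope_pos_beyond_pO mu r C KO delta lam1 Hl1 Hr Hmu HO).
      rewrite <- (exp_ln _ HP). apply exp_increasing, HOt2.
Qed.
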